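(* Let $A$ be a finite nonempty set of actions and $\boldsymbol{v}^0,\boldsymbol{v}^1,\dots\in\mathbb{R}^{|A|}$ an arbitrary sequence of value vectors. Let $\boldsymbol{s}^t$ denote either the regret-matching stored values $\boldsymbol{r}^t$ or the regret-matching$^+$ stored values $\boldsymbol{q}^t$, and $\boldsymbol{\sigma}^t$ the associated policy. Then for all $t$ and all $a\in A$, $$\bigl(s^{t+1,+}_a-s^{t,+}_a\bigr)\bigl(v^t_a-\boldsymbol{\sigma}^t\cdot\boldsymbol{v}^t\bigr)\ge 0.$$
   Context: For $x\in\mathbb{R}$, $x^+:=\max(x,0)$, applied componentwise to vectors; $s^{t,+}_a:=(s^t_a)^+$. Define $\boldsymbol{\sigma}_{\mathrm{rm}}(\boldsymbol{x}):=\boldsymbol{x}^+/(\boldsymbol{1}\cdot\boldsymbol{x}^+)$ if some $x_a>0$, and $\boldsymbol{1}/|A|$ otherwise. Regret-matching: $\boldsymbol{r}^0=\boldsymbol{0}$, $\boldsymbol{\sigma}^t=\boldsymbol{\sigma}_{\mathrm{rm}}(\boldsymbol{r}^t)$, $\boldsymbol{r}^{t+1}=\boldsymbol{r}^t+\boldsymbol{v}^t-(\boldsymbol{\sigma}^t\cdot\boldsymbol{v}^t)\boldsymbol{1}$. Regret-matching$^+$: $\boldsymbol{q}^0=\boldsymbol{0}$, $\boldsymbol{\sigma}^t=\boldsymbol{\sigma}_{\mathrm{rm}}(\boldsymbol{q}^t)$, $\boldsymbol{q}^{t+1}=\bigl(\boldsymbol{q}^t+\boldsymbol{v}^t-(\boldsymbol{\sigma}^t\cdot\boldsymbol{v}^t)\boldsymbol{1}\bigr)^+$.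 *)

From HB Require Import structures.
From mathcomp Require Import all_boot all_order all_algebra.
Set Implicit Arguments. Unset Strict Implicit. Unset Printing Implicit Defensive.
Import Order.TTheory GRing.Theory Num.Theory.
Local Open Scope ring_scope.

Section RM.
Variables (R : realFieldType) (A : finType).

Definition pos (x : R) : R := Num.max x 0.

Definition dot (x y : A -> R) : R := \sum_(a : A) x a * y a.

Definition sigma_rm (x : A -> R) : A -> R :=
  if [exists a, 0 < x a]
  then fun a => pos (x a) / (\sum_(b : A) pos (x b))
  else fun _ => 1 / (#|A|%:R).

Fixpoint rm (v : nat -> A -> R) (t : nat) : A -> R :=
  match t with
  | 0 => fun _ => 0
  | t'.+1 => let r := rm v t' in
             fun a => r a + v t' a - dot (sigma_rm r) (v t')
  end.

Fixpoint rmp (v : nat -> A -> R) (t : nat) : A -> R :=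
  match t with
  | 0 => fun _ => 0
  | t'.+1 => let q := rmp v t' in
             fun a => pos (q a + v t' a - dot (sigma_rm q) (v t'))
  end.

End RM.

From mathcomp Require Import all_boot all_order all_algebra.
Import Order.TTheory GRing.Theory Num.Theory.
Local Open Scope ring_scope.

(* Both updates have the form [s^{t+1}_a = g (s^t_a + d)] with
   [d = v^t_a - sigma^t . v^t] and [g] the identity or the positive part; since
   [pos \o g = pos], the increment of [s^+_a] is [pos (s^t_a + d) - pos s^t_a], which has
   the sign of [d] because the positive part is nondecreasing. *)

Lemma nondecreasing_incr_mul_ge0 (R : realDomainType) (f : R -> R) (x d : R) :
  {homo f : y z / y <= z} -> 0 <= (f (x + d) - f x) * d.
Proof.
move=> f_mono; have [d_ge0 | d_le0] := leP 0 d.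
- by rewrite mulr_ge0 // subr_ge0 f_mono // lerDl.
- by rewrite mulr_le0 ?(ltW d_le0) // subr_le0 f_mono // gerDl ltW.
Qed.

Section PositivePart.
Variable R : realFieldType.

Lemma pos_nondecreasing : {homo @pos R : x y / x <= y}.
Proof. by move=> x y le_xy; rewrite /pos ge_max !le_max le_xy lexx orbT. Qed.

Lemma pos_id (x : R) : pos (pos x) = pos x.
Proof. by rewrite /pos max_maxKx. Qed.

Lemma pos_incr_mul_ge0 (x d : R) : 0 <= (pos (x + d) - pos x) * d.
Proof. exact: nondecreasing_incr_mul_ge0 pos_nondecreasing. Qed.

End PositivePart.

Theorem lemma2 (R : realFieldType) (A : finType) (hA : (0 < #|A|)%N)
    (v : nat -> A -> R) (t : nat) (a : A) :
  0 <= (pos (rm v t.+1 a) - pos (rm v t a))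
         * (v t a - dot (sigma_rm (rm v t)) (v t))
  /\
  0 <= (pos (rmp v t.+1 a) - pos (rmp v t a))
         * (v t a - dot (sigma_rm (rmp v t)) (v t)).
Proof.
split => /=.
- by rewrite -addrA pos_incr_mul_ge0.
- by rewrite pos_id -addrA pos_incr_mul_ge0.
Qed.
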